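(* Let $\mathcal{N}(\rho)=\sum_{j\in [J]} R_j\rho R_j^{\dagger}$ be a CPTP map on $\mathcal{B}((\mathbb{C}^{\mathsf{p}})^{\otimes n})$. Let $\mathcal{C}\subset (\mathbb{C}^{\mathsf{p}})^{\otimes n}$ be a subspace with orthonormal basis $\{\psi_\alpha\}_{\alpha\in [K]}$. Define \[ \epsilon_{\mathsf{approx}}:=\max_{\alpha,\beta\in [K]}\sum_{j\in [J]}\big|\langle\psi_\alpha| R_j|\psi_\beta\rangle-\delta_{\alpha,\beta}\langle\psi_1| R_j|\psi_1\rangle\big|^2 . \] Let $\delta>K^5\epsilon_{\mathsf{approx}}$ be arbitrary. Then $\mathcal{C}$ is an $(\epsilon,\delta)$-approximate quantum error-detection code for $\mathcal{N}$ with $\epsilon = K^5\epsilon_{\mathsf{approx}}\, \delta^{-1}$.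
   Context: Let $P$ be the orthogonal projection onto a subspace $\mathcal{C}\subset(\mathbb{C}^\mathsf{p})^{\otimes n}$ and $\mathcal{N}$ a CPTP map on $\mathcal{B}((\mathbb{C}^\mathsf{p})^{\otimes n})$. $\mathcal{C}$ is called an $(\epsilon,\delta)$-approximate error-detection code for $\mathcal{N}$ if for every unit vector $|\Psi\rangle\in\mathcal{C}$ the following holds: if $\mathrm{tr}(P\mathcal{N}(|\Psi\rangle\langle\Psi|))\geq\delta$ then $\langle\Psi|\rho_{\mathcal{N},P}|\Psi\rangle\geq 1-\epsilon$, where $\rho_{\mathcal{N},P}=\mathrm{tr}(P\mathcal{N}(|\Psi\rangle\langle\Psi|))^{-1}\, P\mathcal{N}(|\Psi\rangle\langle\Psi|)P$. Here $[K]=\{1,\dots,K\}$. *)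

From HB Require Import structures.
From mathcomp Require Import all_boot all_order all_algebra.
From mathcomp Require Import reals.
From mathcomp Require Import complex.
Set Implicit Arguments. Unset Strict Implicit. Unset Printing Implicit Defensive.
Import Order.TTheory GRing.Theory Num.Theory.
Local Open Scope ring_scope.

(* Scalars: complex numbers R[i] over a real type R.
   The Hilbert space (C^p)^{\otimes n} is identified with C^(p^n),
   vectors are column vectors 'cV[R[i]]_(p^n), operators 'M[R[i]]_(p^n). *)

Section Defs.
Variable R : realType.
Local Notation C := (R[i]).

Definition adj m n (A : 'M[C]_(m, n)) : 'M[C]_(n, m) := (map_mx (@conjc R) A)^T.

Definition kraus_map D J (Rs : 'I_J -> 'M[C]_D) (rho : 'M[C]_D) : 'M[C]_D :=
  \sum_(j < J) (Rs j *m rho *m adj (Rs j)).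

(* trace preservation of the Kraus map (complete positivity is automatic
   for a map in Kraus form) *)
Definition kraus_TP D J (Rs : 'I_J -> 'M[C]_D) : Prop :=
  \sum_(j < J) (adj (Rs j) *m Rs j) = 1%:M.

Definition inner D (u v : 'cV[C]_D) : C := (adj u *m v) 0 0.

Definition orthonormal_family D K (psi : 'I_K -> 'cV[C]_D) : Prop :=
  forall a b : 'I_K, inner (psi a) (psi b) = (a == b)%:R.

Definition in_span D K (psi : 'I_K -> 'cV[C]_D) (v : 'cV[C]_D) : Prop :=
  exists c : 'I_K -> C, v = \sum_(a < K) c a *: psi a.

Definition span_proj D K (psi : 'I_K -> 'cV[C]_D) : 'M[C]_D :=
  \sum_(a < K) (psi a *m adj (psi a)).

Definition approx_detection_code D (inC : 'cV[C]_D -> Prop) (P : 'M[C]_D)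
    (N : 'M[C]_D -> 'M[C]_D) (eps delta : R) : Prop :=
  forall Psi : 'cV[C]_D, inC Psi -> inner Psi Psi = 1 ->
    let NP := N (Psi *m adj Psi) in
    let t := \tr (P *m NP) in
    delta <= complex.Re t ->
    1 - eps <= complex.Re (inner Psi ((t^-1 *: (P *m NP *m P)) *m Psi)).

Definition sqmod (z : C) : R := complex.Re z ^+ 2 + complex.Im z ^+ 2.

Definition eps_approx D J K (hK : (0 < K)%N) (Rs : 'I_J -> 'M[C]_D)
    (psi : 'I_K -> 'cV[C]_D) : R :=
  let psi1 := psi (Ordinal hK) in
  \big[Num.max/0]_(a < K) \big[Num.max/0]_(b < K)
    \sum_(j < J) sqmod (inner (psi a) (Rs j *m psi b)
                         - (a == b)%:R * inner psi1 (Rs j *m psi1)).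
End Defs.

From HB Require Import structures.
From mathcomp Require Import all_boot all_order all_algebra.
From mathcomp Require Import reals complex ring.
Set Implicit Arguments. Unset Strict Implicit. Unset Printing Implicit Defensive.
Import Order.TTheory GRing.Theory Num.Theory.
Local Open Scope ring_scope.

(* Write Psi = sum_a c_a psi_a with sum_a |c_a|^2 = 1 and x_j := (<psi_a|R_j Psi>)_a,
   the coordinates of P R_j Psi.  Then tr(P N(|Psi><Psi|)) = sum_j |x_j|^2 and
   <Psi|P N(|Psi><Psi|) P|Psi> = sum_j |<c, x_j>|^2, so the infidelity times the
   trace is sum_j (|x_j|^2 - |<c, x_j>|^2): the squared distances of the x_j to the
   line spanned by c.  Each is at most |x_j - lambda_j c|^2 with
   lambda_j = <psi_1|R_j psi_1>, and by Cauchy-Schwarz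
   |x_j - lambda_j c|^2 <= sum_(a,b) |<psi_a|R_j psi_b> - delta_ab lambda_j|^2.
   Summing over j bounds the defect by K^2 eps_approx (better than the K^5 of
   the statement), and dividing by the trace, which is at least delta, gives
   the claim. *)

Definition dotv (C : numClosedFieldType) (K : nat) (u v : 'I_K -> C) : C :=
  \sum_a (u a)^* * v a.

Section UnitVector.
Variables (C : numClosedFieldType) (K : nat) (c : 'I_K -> C).
Hypothesis c_unit : \sum_a `|c a| ^+ 2 = 1.

Lemma pythagoras_line (x : 'I_K -> C) (lam : C) :
  \sum_a `|x a - lam * c a| ^+ 2
  = \sum_a `|x a| ^+ 2 - `|dotv c x| ^+ 2 + `|dotv c x - lam| ^+ 2.
Proof.
have dotJ : (dotv c x)^* = \sum_a c a * (x a)^*.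
  by rewrite rmorph_sum; apply: eq_bigr => a _; rewrite rmorphM /= conjCK.
have -> : \sum_a `|x a - lam * c a| ^+ 2 = \sum_a `|x a| ^+ 2
    - lam^* * dotv c x - lam * (dotv c x)^* + lam * lam^* * \sum_a `|c a| ^+ 2.
  rewrite dotJ /dotv !mulr_sumr -!sumrB -big_split /=; apply: eq_bigr => a _.
  by rewrite !normCK rmorphB rmorphM /=; ring.
by rewrite c_unit !normCK rmorphB /=; ring.
Qed.

Lemma bessel_line (x : 'I_K -> C) : `|dotv c x| ^+ 2 <= \sum_a `|x a| ^+ 2.
Proof.
have := pythagoras_line x (dotv c x).
rewrite subrr normr0 expr0n /= addr0 => defect.
by rewrite -subr_ge0 -defect sumr_ge0 // => a _; rewrite exprn_ge0.
Qed.

Lemma dist_line_le (x : 'I_K -> C) (lam : C) :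
  \sum_a `|x a| ^+ 2 - `|dotv c x| ^+ 2 <= \sum_a `|x a - lam * c a| ^+ 2.
Proof. by rewrite pythagoras_line lerDl exprn_ge0. Qed.

Lemma dist_line_mx_le (m : 'I_K -> 'I_K -> C) (lam : C) :
  \sum_a `|\sum_b c b * m a b| ^+ 2 - `|dotv c (fun a => \sum_b c b * m a b)| ^+ 2
  <= \sum_a \sum_b `|m a b - (a == b)%:R * lam| ^+ 2.
Proof.
apply: le_trans (dist_line_le _ lam) _; apply: ler_sum => a _.
set e := fun b => m a b - (a == b)%:R * lam.
have -> : \sum_b c b * m a b - lam * c a = (dotv c (fun b => (e b)^*))^*.
  rewrite rmorph_sum; under [RHS]eq_bigr => b _ do rewrite rmorphM /= !conjCK mulrBr.
  rewrite sumrB; congr (_ - _); rewrite (bigD1 a) //= eqxx mul1r mulrC big1 ?addr0 // => b.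
  by rewrite eq_sym => /negbTE ->; rewrite mul0r mulr0.
rewrite norm_conjC; apply: le_trans (bessel_line _) _.
by under eq_bigr => b _ do rewrite norm_conjC.
Qed.

Lemma sum_dist_line_le J (m : 'I_J -> 'I_K -> 'I_K -> C) (lam : 'I_J -> C) (eps : C) :
  (forall a b, \sum_j `|m j a b - (a == b)%:R * lam j| ^+ 2 <= eps) ->
  \sum_j (\sum_a `|\sum_b c b * m j a b| ^+ 2
          - `|dotv c (fun a => \sum_b c b * m j a b)| ^+ 2) <= K%:R ^+ 2 * eps.
Proof.
move=> m_near; apply: le_trans (ler_sum _ (fun j _ => dist_line_mx_le (m j) (lam j))) _.
have -> : K%:R ^+ 2 * eps = \sum_(a < K) \sum_(b < K) eps.
  by rewrite !sumr_const card_ord -mulrnA -[RHS]mulr_natl natrM expr2.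
rewrite exchange_big; apply: ler_sum => a _.
by rewrite exchange_big; apply: ler_sum => b _; apply: m_near.
Qed.

End UnitVector.

Lemma ratio_ge (F : numFieldType) (T B e d : F) :
  0 < d -> d <= T -> 0 <= e -> T - B <= e -> 1 - e / d <= B / T.
Proof.
move=> d_gt0 dT e_ge0 TBe; have T_gt0 := lt_le_trans d_gt0 dT.
have -> : B / T = 1 - (T - B) / T by rewrite mulrBl divff ?gt_eqF // opprB addrC subrK.
rewrite lerB // (le_trans (ler_wpM2r _ TBe)) ?invr_ge0 ?(ltW T_gt0) //.
by rewrite ler_wpM2l // lef_pV2 // posrE.
Qed.

Section InnerProduct.
Variable R : realType.
Local Notation C := R[i].

Lemma conjcE (z : C) : conjc z = z^*.
Proof. by []. Qed.

Lemma adjM m n p (A : 'M[C]_(m, n)) (B : 'M[C]_(n, p)) :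
  adj (A *m B) = adj B *m adj A.
Proof. by rewrite /adj map_mxM trmx_mul. Qed.

Lemma adjK m n (A : 'M[C]_(m, n)) : adj (adj A) = A.
Proof. by apply/matrixP => i j; rewrite /adj !mxE conjcK. Qed.

Lemma adj_sum m n I (r : seq I) (F : I -> 'M[C]_(m, n)) :
  adj (\sum_(i <- r) F i) = \sum_(i <- r) adj (F i).
Proof.
apply/matrixP => i j; rewrite !mxE !summxE rmorph_sum.
by apply: eq_bigr => k _; rewrite !mxE.
Qed.

Lemma adjZ m n (s : C) (A : 'M[C]_(m, n)) : adj (s *: A) = s^* *: adj A.
Proof. by apply/matrixP => i j; rewrite !mxE rmorphM. Qed.

Lemma innerC D (u v : 'cV[C]_D) : inner v u = (inner u v)^*.
Proof.
rewrite /inner !mxE rmorph_sum; apply: eq_bigr => k _.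
by rewrite !mxE conjcE rmorphM /= conjCK mulrC.
Qed.

Lemma inner_mulmx D (u v : 'cV[C]_D) (A : 'M[C]_D) :
  inner u (A *m v) = inner (adj A *m u) v.
Proof. by rewrite /inner adjM adjK mulmxA. Qed.

Lemma innerZr D (u v : 'cV[C]_D) (s : C) : inner u (s *: v) = s * inner u v.
Proof. by rewrite /inner -scalemxAr mxE. Qed.

Lemma inner_sumZl D K (c : 'I_K -> C) (u : 'I_K -> 'cV[C]_D) w :
  inner (\sum_a c a *: u a) w = \sum_a (c a)^* * inner (u a) w.
Proof.
rewrite /inner adj_sum mulmx_suml summxE; apply: eq_bigr => a _.
by rewrite adjZ -scalemxAl mxE.
Qed.

Lemma inner_sumZr D K (c : 'I_K -> C) (u : 'I_K -> 'cV[C]_D) w :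
  inner w (\sum_a c a *: u a) = \sum_a c a * inner w (u a).
Proof.
by rewrite /inner mulmx_sumr summxE; apply: eq_bigr => a _; rewrite -scalemxAr mxE.
Qed.

Lemma inner_kraus_map_rank1 D J (Rs : 'I_J -> 'M[C]_D) (u v : 'cV[C]_D) :
  inner u (kraus_map Rs (v *m adj v) *m u) = \sum_j `|inner u (Rs j *m v)| ^+ 2.
Proof.
rewrite /kraus_map mulmx_suml {1}/inner mulmx_sumr summxE; apply: eq_bigr => j _.
have -> : Rs j *m (v *m adj v) *m adj (Rs j) = (Rs j *m v) *m adj (Rs j *m v).
  by rewrite adjM !mulmxA.
rewrite normCK -innerC /inner !mulmxA -(mulmxA _ (adj _)).
by rewrite [LHS]mxE big_ord1.
Qed.

Section SpanProjection.
Variables (D K : nat) (psi : 'I_K -> 'cV[C]_D).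

Lemma mxtrace_span_proj (A : 'M[C]_D) :
  \tr (span_proj psi *m A) = \sum_a inner (psi a) (A *m psi a).
Proof.
rewrite /span_proj mulmx_suml raddf_sum /=; apply: eq_bigr => a _.
by rewrite -mulmxA mxtrace_mulC -mulmxA /mxtrace big_ord1.
Qed.

Lemma adj_span_proj : adj (span_proj psi) = span_proj psi.
Proof. by rewrite /span_proj adj_sum; apply: eq_bigr => a _; rewrite adjM adjK. Qed.

Hypothesis psi_orth : orthonormal_family psi.

Lemma inner_span_coord (c : 'I_K -> C) a :
  inner (psi a) (\sum_b c b *: psi b) = c a.
Proof.
rewrite inner_sumZr (bigD1 a) //= psi_orth eqxx mulr1 big1 ?addr0 // => b ba.
by rewrite psi_orth eq_sym (negbTE ba) mulr0.
Qed.

Lemma span_proj_id (c : 'I_K -> C) :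
  span_proj psi *m (\sum_b c b *: psi b) = \sum_b c b *: psi b.
Proof.
rewrite {1}/span_proj mulmx_suml; apply: eq_bigr => a _.
rewrite -mulmxA [adj (psi a) *m _]mx11_scalar mul_mx_scalar.
by rewrite -[(_ *m _) 0 0]/(inner (psi a) _) inner_span_coord.
Qed.

Lemma inner_span_sqr (c : 'I_K -> C) :
  inner (\sum_a c a *: psi a) (\sum_a c a *: psi a) = \sum_a `|c a| ^+ 2.
Proof.
by rewrite inner_sumZl; apply: eq_bigr => a _; rewrite inner_span_coord normCK mulrC.
Qed.

End SpanProjection.

Lemma inner_sandwich D (P A : 'M[C]_D) (v : 'cV[C]_D) :
  adj P = P -> P *m v = v -> inner v ((P *m A *m P) *m v) = inner v (A *m v).
Proof.
by move=> P_sa Pv; rewrite -!mulmxA Pv inner_mulmx P_sa Pv.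
Qed.

End InnerProduct.

Section EpsApprox.
Variables (R : realType) (D J K : nat) (hK : (0 < K)%N).
Variables (Rs : 'I_J -> 'M[R[i]]_D) (psi : 'I_K -> 'cV[R[i]]_D).

Lemma eps_approx_ub a b :
  \sum_j sqmod (inner (psi a) (Rs j *m psi b)
                - (a == b)%:R * inner (psi (Ordinal hK)) (Rs j *m psi (Ordinal hK)))
  <= eps_approx hK Rs psi.
Proof. by apply: le_trans (le_bigmax _ _ a); apply: le_bigmax. Qed.

Lemma eps_approx_ge0 : 0 <= eps_approx hK Rs psi.
Proof.
apply: le_trans (eps_approx_ub (Ordinal hK) (Ordinal hK)).
by apply: sumr_ge0 => j _; rewrite addr_ge0 ?sqr_ge0.
Qed.

End EpsApprox.

Lemma lecRe (R : realType) (x : R) (z : R[i]) :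
  0 <= z -> (x%:C%C <= z) = (x <= complex.Re z).
Proof. by move=> z_ge0; rewrite -[in LHS](RRe_real (ger0_real z_ge0)) lecR. Qed.

Lemma Re_ratio_ge (R : realType) (T B : R[i]) (e d : R) :
  0 < d -> d <= complex.Re T -> 0 <= T -> 0 <= B -> 0 <= e -> T - B <= e%:C%C ->
  1 - e / d <= complex.Re (T^-1 * B).
Proof.
move=> d_gt0 dT T_ge0 B_ge0 e_ge0 TBe.
rewrite -lecRe ?mulr_ge0 ?invr_ge0 // [T^-1 * B]mulrC rmorphB rmorph1 rmorphM fmorphV /=.
apply: ratio_ge TBe; first by rewrite ltcR.
- by rewrite lecRe.
- by rewrite ler0c.
Qed.

Lemma sqmodE (R : realType) (z : R[i]) : (sqmod z)%:C%C = `|z| ^+ 2.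
Proof. exact: add_Re2_Im2. Qed.

Section CodeState.
Variables (R : realType) (D J K : nat).
Variables (Rs : 'I_J -> 'M[R[i]]_D) (psi : 'I_K -> 'cV[R[i]]_D) (c : 'I_K -> R[i]).

Let Psi := \sum_a c a *: psi a.
Let x j a := \sum_b c b * inner (psi a) (Rs j *m psi b).

Lemma inner_kraus_code j a : inner (psi a) (Rs j *m Psi) = x j a.
Proof.
by rewrite mulmx_sumr; under eq_bigr do rewrite -scalemxAr; rewrite inner_sumZr.
Qed.

Lemma mxtrace_proj_kraus_code :
  \tr (span_proj psi *m kraus_map Rs (Psi *m adj Psi)) = \sum_j \sum_a `|x j a| ^+ 2.
Proof.
rewrite mxtrace_span_proj (eq_bigr _ (fun a _ => inner_kraus_map_rank1 _ _ _)).
rewrite exchange_big; apply: eq_bigr => j _.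
by apply: eq_bigr => a _; rewrite inner_kraus_code.
Qed.

Hypothesis psi_orth : orthonormal_family psi.

Lemma inner_proj_kraus_proj_code (s : R[i]) :
  inner Psi ((s *: (span_proj psi *m kraus_map Rs (Psi *m adj Psi) *m span_proj psi))
               *m Psi) = s * \sum_j `|dotv c (x j)| ^+ 2.
Proof.
rewrite -scalemxAl innerZr inner_sandwich ?adj_span_proj ?span_proj_id //.
rewrite inner_kraus_map_rank1; congr (_ * _); apply: eq_bigr => j _.
rewrite {1}/Psi inner_sumZl; congr (`|_| ^+ 2).
by apply: eq_bigr => a _; rewrite inner_kraus_code.
Qed.

Lemma code_defect_le (hK : (0 < K)%N) :
  \sum_a `|c a| ^+ 2 = 1 ->
  \sum_j \sum_a `|x j a| ^+ 2 - \sum_j `|dotv c (x j)| ^+ 2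
  <= (K%:R ^+ 2 * eps_approx hK Rs psi)%:C%C.
Proof.
move=> c_unit; rewrite -sumrB rmorphM rmorphXn rmorph_nat /= /x.
apply: (sum_dist_line_le (m := fun j a b => inner (psi a) (Rs j *m psi b))
  (lam := fun j => inner (psi (Ordinal hK)) (Rs j *m psi (Ordinal hK))) c_unit) => a b.
under eq_bigr => j _ do rewrite -sqmodE.
by rewrite -rmorph_sum lecR eps_approx_ub.
Qed.

End CodeState.

Theorem theorem1 (R : realType) (p n J K : nat) (hK : (0 < K)%N)
    (Rs : 'I_J -> 'M[R[i]]_(p ^ n)) (psi : 'I_K -> 'cV[R[i]]_(p ^ n)) :
  kraus_TP Rs ->
  orthonormal_family psi ->
  forall delta : R,
    (K%:R ^+ 5 * eps_approx hK Rs psi < delta) ->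
    approx_detection_code (in_span psi) (span_proj psi) (kraus_map Rs)
      (K%:R ^+ 5 * eps_approx hK Rs psi / delta) delta.
Proof.
move=> _ psi_orth delta eps_lt_delta _ [c ->] Psi_unit /=.
have c_unit : \sum_a `|c a| ^+ 2 = 1 by rewrite -(inner_span_sqr psi_orth).
rewrite inner_proj_kraus_proj_code // mxtrace_proj_kraus_code => delta_le_T.
have eps_ge0 := eps_approx_ge0 hK Rs psi.
have K2_le_K5 : K%:R ^+ 2 * eps_approx hK Rs psi <= K%:R ^+ 5 * eps_approx hK Rs psi.
  by rewrite ler_wpM2r // ler_weXn2l // ler1n.
apply: Re_ratio_ge => //.
- by apply: le_lt_trans eps_lt_delta; rewrite mulr_ge0 ?exprn_ge0.
- by do 2!apply: sumr_ge0 => ? _; apply: exprn_ge0.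
- by apply: sumr_ge0 => j _; apply: exprn_ge0.
- by rewrite mulr_ge0 ?exprn_ge0.
- by apply: le_trans (code_defect_le _ _ hK c_unit) _; rewrite lecR.
Qed.
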